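(* Let a motion digraph $\mathcal{M}=(\mathbb{Z}_\varkappa,\mathcal{W})$, an infection probability $\alpha\in[0,1]$ and a recovery probability $\beta\in[0,1]$ be given, and consider the agent-based SIR model with $N$ mobile agents described below. Then there exists a stochastic digraph $\boldsymbol{\mathcal{SIRM}}$ whose stochastic directed paths are in one-to-one correspondence with the trajectories of the agent-based SIR model with mobile agents.
   Context: Agent-based SIR model: agent $i\in\{1,\dots,N\}$ has state $(\sigma_i,\varpi_i)$ with $\sigma_i\in\{1,2,3\}$ (susceptible, infected, recovered) and position $\varpi_i\in\mathbb{Z}_\varkappa$. Positions evolve by $\varpi_i^+\in\mathcal{N}^o(\varpi_i)$, where $\mathcal{N}^o(\varpi)=\{y:(\varpi,y)\in\mathcal{W}\}$ is the out-neighborhood in $\mathcal{M}$ (the choice among out-neighbors is arbitrary, i.e., nondeterministic). Epidemic states evolve by $\sigma_i^+=G_i(\sigma,\varpi,u_i,v_i)$ with $G_i=1$ if $\sigma_i=1$ and there is no $j\neq i$ with $\varpi_i=\varpi_j$, $\sigma_j=2$ and $[u_i]_j=2$; $G_i=2$ if $\sigma_i=1$ and such a $j$ exists; $G_i=v_i+1$ if $\sigma_i=2$; $G_i=3$ if $\sigma_i=3$. Here $(\boldsymbol{u_i})_k\in\{1,2\}^N$ and $(\boldsymbol{v_i})_k\in\{1,2\}$, $i=1,\dots,N$, are sequences of i.i.d. random variables with $\mathbb{P}([(\boldsymbol{u_i})_k]_j=2)=\alpha$ for each $j$ and $\mathbb{P}((\boldsymbol{v_i})_k=2)=\beta$ (the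 infection events being independent). A stochastic digraph is a triple $(\mathbb{Z}_{n},\{\mathcal{E}_s\}_{s=1}^h,\mu)$ with $\mathcal{E}_s\subset\mathbb{Z}_n\times\mathbb{Z}_n$ and $\mu$ the common distribution of an i.i.d. sequence $\boldsymbol{w}_k:\Omega\to\mathbb{Z}_h$ on a probability space; with $H(x,w)=\{y:(x,y)\in\mathcal{E}_w\}$, a stochastic directed path from $x$ is a map $\omega\mapsto\{\boldsymbol{x}_k(\omega)\}_{k}$ with $\boldsymbol{x}_0=x$, $\boldsymbol{x}_{k+1}(\omega)\in H(\boldsymbol{x}_k(\omega),\boldsymbol{w}_k(\omega))$, and $\boldsymbol{x}_{k+1}$ measurable with respect to $\sigma(\boldsymbol{w}_0,\dots,\boldsymbol{w}_k)$. *)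

From HB Require Import structures.
From mathcomp Require Import all_boot all_order all_algebra.
From mathcomp Require Import all_classical all_reals.
From mathcomp Require Import ereal measure probability.

Set Implicit Arguments.
Unset Strict Implicit.
Unset Printing Implicit Defensive.

Import Order.TTheory GRing.Theory Num.Theory.
Local Open Scope classical_set_scope.
Local Open Scope ring_scope.

(* Epidemic states sigma_i in {1,2,3} are encoded as 'I_3:
   ord 0 = 1 (susceptible), ord 1 = 2 (infected), ord 2 = 3 (recovered). *)
Definition Sus : 'I_3 := @Ordinal 3 0 isT.
Definition Inf : 'I_3 := @Ordinal 3 1 isT.
Definition Rec : 'I_3 := @Ordinal 3 2 isT.

Definition sir_state (N kappa : nat) : finType :=
  ({ffun 'I_N -> 'I_3} * {ffun 'I_N -> 'I_kappa})%type.

(* Noise at one time step: (u_i)_i with u_i in {1,2}^N and (v_i)_i with v_i in {1,2};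
   the boolean 'true' encodes the value 2. *)
Definition sir_noise (N : nat) : finType :=
  ({ffun 'I_N -> {ffun 'I_N -> bool}} * {ffun 'I_N -> bool})%type.

Definition G (N kappa : nat) (i : 'I_N) (sigma : {ffun 'I_N -> 'I_3})
    (varpi : {ffun 'I_N -> 'I_kappa}) (ui : {ffun 'I_N -> bool}) (vi : bool) : 'I_3 :=
  if sigma i == Sus then
    (if [exists j, [&& j != i, varpi i == varpi j, sigma j == Inf & ui j]]
     then Inf else Sus)
  else if sigma i == Inf then (if vi then Rec else Inf)
  else Rec.

Section Prob.
Context {R : realType} {d : measure_display} {Omega : measurableType d}.
Variable P : probability Omega R.

Definition fin_rv (T : finType) (Z : Omega -> T) : Prop :=
  forall a : T, measurable (Z @^-1` [set a]).

Definition mutually_indep (I : eqType) (T : finType) (Y : I -> Omega -> T) : Prop :=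
  forall (s : seq I) (b : I -> T), uniq s ->
    P (\bigcap_(i in [set` s]) (Y i @^-1` [set b i])) =
    (\prod_(i <- s) P (Y i @^-1` [set b i]))%E.

(* sigma(Z_0, ..., Z_k): for finite-valued Z_i these are exactly the preimages
   of subsets of T^(k+1) under omega |-> (Z_0 omega, ..., Z_k omega). *)
Definition sigma_gen (T : finType) (Z : nat -> Omega -> T) (k : nat) : set (set Omega) :=
  [set A | exists B : {set {ffun 'I_k.+1 -> T}},
             A = [set om | [ffun i : 'I_k.+1 => Z i om] \in B]].

Definition measurable_wrt (T : finType) (F : set (set Omega)) (X : Omega -> T) : Prop :=
  forall y : T, F [set om | X om = y].

Definition prob_distr (h : nat) (mu : {ffun 'I_h -> R}) : Prop :=
  (forall s, 0 <= mu s) /\ \sum_(s < h) mu s = 1.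

Definition iid_with_law (h : nat) (w : nat -> Omega -> 'I_h) (mu : {ffun 'I_h -> R}) : Prop :=
  (forall k, fin_rv (w k)) /\ mutually_indep w /\
  (forall k s, P (w k @^-1` [set s]) = (mu s)%:E).

Definition stoch_path (n h : nat) (E : 'I_h -> rel 'I_n) (w : nat -> Omega -> 'I_h)
    (x0 : 'I_n) (x : nat -> Omega -> 'I_n) : Prop :=
  (forall om, x 0%N om = x0) /\
  (forall k om, E (w k om) (x k om) (x k.+1 om)) /\
  (forall k, measurable_wrt (sigma_gen w k) (x k.+1)).

(* Positions evolve nondeterministically inside out-neighbourhoods; as for
   stochastic paths, the state at time k+1 must be determined by the noise up
   to time k (measurable w.r.t. sigma((u,v)_0, ..., (u,v)_k)). *)
Definition sir_trajectory (N kappa : nat) (W : rel 'I_kappa)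
    (U : nat -> Omega -> {ffun 'I_N -> {ffun 'I_N -> bool}})
    (V : nat -> Omega -> {ffun 'I_N -> bool})
    (s0 : sir_state N kappa) (X : nat -> Omega -> sir_state N kappa) : Prop :=
  (forall om, X 0%N om = s0) /\
  (forall k om i, (X k.+1 om).1 i = G i (X k om).1 (X k om).2 (U k om i) (V k om i)) /\
  (forall k om i, W ((X k om).2 i) ((X k.+1 om).2 i)) /\
  (forall k, measurable_wrt (sigma_gen (fun k om => (U k om, V k om) : sir_noise N) k)
                            (X k.+1)).

Definition sir_bits (N : nat)
    (U : nat -> Omega -> {ffun 'I_N -> {ffun 'I_N -> bool}})
    (V : nat -> Omega -> {ffun 'I_N -> bool})
    (idx : (nat * (('I_N * 'I_N) + 'I_N))%type) : Omega -> bool :=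
  match idx with
  | (k, inl (i, j)) => fun om => U k om i j
  | (k, inr i) => fun om => V k om i
  end.

Definition sir_noise_assumptions (N : nat) (alpha beta : R)
    (U : nat -> Omega -> {ffun 'I_N -> {ffun 'I_N -> bool}})
    (V : nat -> Omega -> {ffun 'I_N -> bool}) : Prop :=
  (forall idx, fin_rv (sir_bits U V idx)) /\
  mutually_indep (sir_bits U V) /\
  (forall k i j, P ((fun om => U k om i j) @^-1` [set true]) = alpha%:E) /\
  (forall k i, P ((fun om => V k om i) @^-1` [set true]) = beta%:E).

End Prob.

From HB Require Import structures.
From mathcomp Require Import all_boot all_order all_algebra.
From mathcomp Require Import all_classical all_reals.
From mathcomp Require Import ereal measure probability.
Import Order.TTheory GRing.Theory Num.Theory.
Local Open Scope classical_set_scope.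
Local Open Scope ring_scope.

(* Take as vertices the finitely many joint states of the agents and as edge
   labels the finitely many noise values (u, v) of one time step: y is an
   s-successor of x iff y is a possible SIR update of x under the noise s.
   Ranking both finite types gives Z_n and Z_h; ranking is a bijection, so it
   preserves edges, initial states and the sigma-algebras generated by the
   noise.  The law of a label is the product of the Bernoulli laws of its
   bits, and independence of all bits across all times makes the labels
   i.i.d. *)

Definition ranked_digraph {T S : finType} (step : S -> rel T) :
    'I_#|S| -> rel 'I_#|T| :=
  fun c x y => step (enum_val c) (enum_val x) (enum_val y).

Section Transport.
Context {d : measure_display} {Omega : measurableType d}.

Lemma sigma_gen_comp (T T' : finType) (f : T -> T') (Z : nat -> Omega -> T) k A :
  sigma_gen (fun k om => f (Z k om)) k A -> sigma_gen Z k A.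
Proof.
move=> [B ->].
exists (finset (fun phi : {ffun 'I_k.+1 -> T} => [ffun i => f (phi i)] \in B)).
apply/seteqP; split=> om /=; rewrite inE;
  suff -> : [ffun i : 'I_k.+1 => f ([ffun i0 : 'I_k.+1 => Z i0 om] i)] =
            [ffun i : 'I_k.+1 => f (Z i om)] by [].
all: by apply/ffunP=> i; rewrite !ffunE.
Qed.

Lemma sigma_gen_comp_bij {T T' : finType} {f : T -> T'} (Z : nat -> Omega -> T) {k A} :
  bijective f -> sigma_gen (fun k om => f (Z k om)) k A <-> sigma_gen Z k A.
Proof.
move=> [g fK _]; split; first exact: sigma_gen_comp.
move=> ZA; apply: (@sigma_gen_comp _ _ g).
suff -> : (fun k om => g (f (Z k om))) = Z by [].
by apply/funext=> k'; apply/funext=> om; rewrite fK.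
Qed.

Lemma measurable_wrt_comp_bij (T T' : finType) (F : set (set Omega))
    (f : T -> T') (X : Omega -> T) :
  bijective f -> measurable_wrt F (fun om => f (X om)) <-> measurable_wrt F X.
Proof.
move=> [g fK gK].
have preimE y : [set om | f (X om) = y] = [set om | X om = g y].
  by apply/seteqP; split=> om /= h; [rewrite -h fK | rewrite h gK].
split=> FX y; first by have := FX (f y); rewrite preimE fK.
by rewrite preimE; exact: FX.
Qed.

Lemma enum_rank_preimage (S : finType) (Z : Omega -> S) (c : 'I_#|S|) :
  (fun om => enum_rank (Z om)) @^-1` [set c] = [set om | Z om = enum_val c].
Proof.
by apply/seteqP; split=> om /=; [move=> <- | move=> ->]; rewrite ?enum_rankK ?enum_valK.
Qed.

Lemma stoch_path_enum_rank {T S : finType} (step : S -> rel T)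
    (Z : nat -> Omega -> S) (x0 : T) (X : nat -> Omega -> T) :
  stoch_path (ranked_digraph step)
    (fun k om => enum_rank (Z k om)) (enum_rank x0) (fun k om => enum_rank (X k om))
  <-> [/\ forall om, X 0%N om = x0,
          forall k om, step (Z k om) (X k om) (X k.+1 om) &
          forall k, measurable_wrt (sigma_gen Z k) (X k.+1)].
Proof.
have measE k : measurable_wrt (sigma_gen (fun k om => enum_rank (Z k om)) k)
                 (fun om => enum_rank (X k.+1 om)) <->
               measurable_wrt (sigma_gen Z k) (X k.+1).
  rewrite measurable_wrt_comp_bij; last exact: enum_rank_bij.
  split=> FX y;
    by apply/(sigma_gen_comp_bij Z (enum_rank_bij S)); exact: FX.
rewrite /stoch_path /ranked_digraph; split.
- move=> [X0 [Xstep Xmeas]]; split.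
  + by move=> om; apply: enum_rank_inj; rewrite X0.
  + by move=> k om; have := Xstep k om; rewrite !enum_rankK.
  + by move=> k; apply/measE.
- move=> [X0 Xstep Xmeas]; split; [|split].
  + by move=> om; rewrite X0.
  + by move=> k om; rewrite !enum_rankK.
  + by move=> k; apply/measE.
Qed.

End Transport.

Section FiniteLaw.
Context {R : realType} {d : measure_display} {Omega : measurableType d}.
Variable P : probability Omega R.

Lemma prob_distr_enum_val (S : finType) (q : S -> R) :
  (forall z, 0 <= q z) -> \sum_z q z = 1 -> prob_distr [ffun c => q (@enum_val S predT c)].
Proof.
move=> q_ge0 q_sum1; split=> [c | ]; first by rewrite ffunE.
under eq_bigr do rewrite ffunE.
by rewrite -big_enum_val.
Qed.

Lemma iid_with_law_enum_rank (S : finType) (Z : nat -> Omega -> S) (q : S -> R) :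
  (forall k z, measurable [set om | Z k om = z]) ->
  (forall (s : seq nat) (z : nat -> S), uniq s ->
     P (\bigcap_(k in [set` s]) [set om | Z k om = z k]) = (\prod_(k <- s) (q (z k))%:E)%E) ->
  iid_with_law P (fun k om => enum_rank (Z k om)) [ffun c => q (enum_val c)].
Proof.
move=> Zmeas Zindep.
have Zlaw k z : P [set om | Z k om = z] = (q z)%:E.
  by have := Zindep [:: k] (fun=> z) isT; rewrite set_cons1 bigcap_set1 big_seq1.
split; [|split].
- by move=> k c; rewrite enum_rank_preimage.
- move=> s c s_uniq.
  under eq_bigcapr do rewrite enum_rank_preimage.
  rewrite Zindep //; apply: eq_bigr => k _.
  by rewrite enum_rank_preimage Zlaw.
- by move=> k c; rewrite enum_rank_preimage Zlaw ffunE.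
Qed.

Lemma preimage_false_prob (Y : Omega -> bool) (p : R) :
  measurable (Y @^-1` [set true]) -> P (Y @^-1` [set true]) = p%:E ->
  P (Y @^-1` [set false]) = (1 - p)%:E.
Proof.
move=> Y_meas Y_law.
have -> : Y @^-1` [set false] = ~` (Y @^-1` [set true]).
  by apply/seteqP; split=> om /=; case: (Y om).
by rewrite probability_setC // Y_law EFinB.
Qed.

End FiniteLaw.

Lemma sum_ffun_prod_bool (R : comNzRingType) (I : finType) (q : I -> bool -> R) :
  (forall i, q i true + q i false = 1) ->
  \sum_(f : {ffun I -> bool}) \prod_i q i (f i) = 1.
Proof.
move=> q_sum1; rewrite -bigA_distr_bigA /= big1 // => i _.
by rewrite big_bool; exact: q_sum1.
Qed.

Definition bit_index (N : nat) : finType := (('I_N * 'I_N) + 'I_N)%type.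

Definition noise_bit {N : nat} (z : sir_noise N) (x : bit_index N) : bool :=
  match x with inl (i, j) => z.1 i j | inr i => z.2 i end.

Definition bits_of_noise {N : nat} (z : sir_noise N) : {ffun bit_index N -> bool} :=
  [ffun x => noise_bit z x].

Definition noise_of_bits {N : nat} (f : {ffun bit_index N -> bool}) : sir_noise N :=
  ([ffun i => [ffun j => f (inl (i, j))]], [ffun i => f (inr i)]).

Lemma noise_of_bitsK (N : nat) : cancel (@bits_of_noise N) noise_of_bits.
Proof.
move=> [u v]; congr pair; apply/ffunP=> i; rewrite !ffunE //.
by apply/ffunP=> j; rewrite !ffunE.
Qed.

Lemma noise_bit_of_bits (N : nat) (f : {ffun bit_index N -> bool}) x :
  noise_bit (noise_of_bits f) x = f x.
Proof. by case: x => [[i j]|i]; rewrite /= !ffunE. Qed.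

Lemma bits_of_noiseK (N : nat) : cancel (@noise_of_bits N) bits_of_noise.
Proof. by move=> f; apply/ffunP=> x; rewrite ffunE noise_bit_of_bits. Qed.

Lemma noise_bit_inj (N : nat) (z z' : sir_noise N) :
  noise_bit z =1 noise_bit z' -> z = z'.
Proof.
move=> zz'; apply: (can_inj (@noise_of_bitsK N)).
by apply/ffunP=> x; rewrite !ffunE; exact: zz'.
Qed.

Section NoiseLaw.
Context {R : realType}.
Variables alpha beta : R.

Definition bit_prob {N : nat} (x : bit_index N) (b : bool) : R :=
  let p := if x is inl _ then alpha else beta in if b then p else 1 - p.

Definition noise_prob {N : nat} (z : sir_noise N) : R :=
  \prod_x bit_prob x (noise_bit z x).

Lemma noise_prob_ge0 (N : nat) (z : sir_noise N) :
  0 <= alpha <= 1 -> 0 <= beta <= 1 -> 0 <= noise_prob z.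
Proof.
move=> /andP[a_ge0 a_le1] /andP[b_ge0 b_le1]; apply: prodr_ge0 => -[? | ?] _;
  by case: noise_bit; rewrite /bit_prob ?subr_ge0.
Qed.

Lemma sum_noise_prob (N : nat) : \sum_(z : sir_noise N) noise_prob z = 1.
Proof.
rewrite /noise_prob (reindex noise_of_bits) /=; last first.
  by apply: onW_bij; exists bits_of_noise; [exact: bits_of_noiseK | exact: noise_of_bitsK].
under eq_bigr do under eq_bigr do rewrite noise_bit_of_bits.
by apply: sum_ffun_prod_bool => -[? | ?]; rewrite /bit_prob addrC subrK.
Qed.

End NoiseLaw.

Section SIRNoise.
Context {R : realType} {d : measure_display} {Omega : measurableType d}.
Context {P : probability Omega R} {N : nat} {alpha beta : R}.
Context {U : nat -> Omega -> {ffun 'I_N -> {ffun 'I_N -> bool}}}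
        {V : nat -> Omega -> {ffun 'I_N -> bool}}.
Hypothesis hUV : sir_noise_assumptions P alpha beta U V.

Lemma sir_bitsE k x om : sir_bits U V (k, x) om = noise_bit (U k om, V k om) x.
Proof. by case: x => [[i j]|i]. Qed.

Lemma sir_bit_law k x b :
  P (sir_bits U V (k, x) @^-1` [set b]) = (bit_prob alpha beta x b)%:E.
Proof.
have [bits_meas [_ [U_law V_law]]] := hUV.
have true_law : P (sir_bits U V (k, x) @^-1` [set true]) = (bit_prob alpha beta x true)%:E.
  by case: x => [[i j]|i]; [exact: U_law | exact: V_law].
case: b => //; rewrite (preimage_false_prob P _ _ (bits_meas (k, x) true) true_law).
by case: {true_law} x.
Qed.

Definition bit_indices (ts : seq nat) : seq (nat * bit_index N) :=
  [seq (k, x) | k <- ts, x <- enum (bit_index N)].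

Lemma noise_events_bits (ts : seq nat) (z : nat -> sir_noise N) :
  \bigcap_(k in [set` ts]) [set om | (U k om, V k om) = z k] =
  \bigcap_(kx in [set` bit_indices ts]) (sir_bits U V kx @^-1` [set noise_bit (z kx.1) kx.2]).
Proof.
apply/seteqP; split=> om /= Hom.
- move=> _ /allpairsP[[k x] /= [k_ts _ ->]].
  by rewrite (sir_bitsE k x om) (Hom k k_ts).
- move=> k k_ts; apply: noise_bit_inj => x; rewrite -sir_bitsE; apply: (Hom (k, x)).
  by apply/allpairsP; exists (k, x); split; rewrite ?mem_enum.
Qed.

Lemma noise_events_prob (ts : seq nat) (z : nat -> sir_noise N) : uniq ts ->
  P (\bigcap_(k in [set` ts]) [set om | (U k om, V k om) = z k]) =
  (\prod_(k <- ts) (noise_prob alpha beta (z k))%:E)%E.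
Proof.
move=> ts_uniq; have bits_uniq : uniq (bit_indices ts).
  apply: allpairs_uniq => //; first exact: enum_uniq.
  by move=> [? ?] [? ?] _ _ /= [-> ->].
rewrite noise_events_bits (hUV.2.1 _ _ bits_uniq) big_allpairs; apply: eq_bigr => k _.
rewrite big_enum /= -prodEFin; apply: eq_bigr => x _; exact: sir_bit_law.
Qed.

Lemma noise_event_measurable k (z : sir_noise N) :
  measurable [set om | (U k om, V k om) = z].
Proof.
have := noise_events_bits [:: k] (fun=> z); rewrite set_cons1 bigcap_set1 => ->.
by apply: fin_bigcap_measurable; [exact: finite_seq | move=> kx _; exact: hUV.1].
Qed.

End SIRNoise.

Definition sir_step {N kappa : nat} (W : rel 'I_kappa) (z : sir_noise N) :
    rel (sir_state N kappa) :=
  fun x y => [forall i, (y.1 i == G i x.1 x.2 (z.1 i) (z.2 i)) && W (x.2 i) (y.2 i)].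

Lemma sir_trajectoryE {d : measure_display} {Omega : measurableType d}
    (N kappa : nat) (W : rel 'I_kappa)
    (U : nat -> Omega -> {ffun 'I_N -> {ffun 'I_N -> bool}})
    (V : nat -> Omega -> {ffun 'I_N -> bool})
    (s0 : sir_state N kappa) (X : nat -> Omega -> sir_state N kappa) :
  sir_trajectory W U V s0 X <->
  [/\ forall om, X 0%N om = s0,
      forall k om, sir_step W (U k om, V k om) (X k om) (X k.+1 om) &
      forall k, measurable_wrt (sigma_gen (fun k om => (U k om, V k om) : sir_noise N) k)
                               (X k.+1)].
Proof.
split.
- move=> [X0 [Xsir [Xmove Xmeas]]]; split=> // k om.
  by apply/forallP=> i; rewrite Xsir eqxx Xmove.
- move=> [X0 Xstep Xmeas]; split=> //.
  have Xstep_at k om i := forallP (Xstep k om) i.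
  split; [|split=> //] => k om i; have /andP[/eqP Xsir Xmove] := Xstep_at k om i.
  + exact: Xsir.
  + exact: Xmove.
Qed.

Lemma sir_trajectory_stoch_path {d : measure_display} {Omega : measurableType d}
    (N kappa : nat) (W : rel 'I_kappa)
    (U : nat -> Omega -> {ffun 'I_N -> {ffun 'I_N -> bool}})
    (V : nat -> Omega -> {ffun 'I_N -> bool})
    (s0 : sir_state N kappa) (X : nat -> Omega -> sir_state N kappa) :
  sir_trajectory W U V s0 X <->
  stoch_path (ranked_digraph (sir_step W))
    (fun k om => enum_rank ((U k om, V k om) : sir_noise N)) (enum_rank s0)
    (fun k om => enum_rank (X k om)).
Proof.
apply: iff_trans (sir_trajectoryE _ _ _ _ _ s0 X) _; apply: iff_sym.
exact: (stoch_path_enum_rank (sir_step W) (fun k om => (U k om, V k om) : sir_noise N)).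
Qed.

Theorem theorem3 (R : realType) (d : measure_display) (Omega : measurableType d)
    (P : probability Omega R) (kappa N : nat) (W : rel 'I_kappa) (alpha beta : R)
    (halpha : 0 <= alpha <= 1) (hbeta : 0 <= beta <= 1)
    (U : nat -> Omega -> {ffun 'I_N -> {ffun 'I_N -> bool}})
    (V : nat -> Omega -> {ffun 'I_N -> bool})
    (hUV : sir_noise_assumptions P alpha beta U V) :
  exists (n h : nat) (E : 'I_h -> rel 'I_n) (mu : {ffun 'I_h -> R})
         (enc : sir_state N kappa -> 'I_n) (code : sir_noise N -> 'I_h),
    [/\ bijective enc, bijective code, prob_distr mu,
        iid_with_law P (fun k om => code (U k om, V k om)) mu &
        forall (s0 : sir_state N kappa) (X : nat -> Omega -> sir_state N kappa),
          sir_trajectory W U V s0 X <->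
          stoch_path E (fun k om => code (U k om, V k om)) (enc s0)
                     (fun k om => enc (X k om))].
Proof.
exists _, _, (ranked_digraph (@sir_step N kappa W)),
  [ffun c => noise_prob alpha beta (enum_val c)], enum_rank, enum_rank.
split; try exact: enum_rank_bij.
- apply: prob_distr_enum_val; last exact: sum_noise_prob.
  by move=> z; exact: noise_prob_ge0.
- apply: iid_with_law_enum_rank => [k z | s z s_uniq].
  + exact: (noise_event_measurable hUV).
  + exact: (noise_events_prob hUV).
- by move=> s0 X; exact: sir_trajectory_stoch_path.
Qed.
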